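(* Let $\mathcal T$ be a rooted binary phylogenetic $X$-tree. Then $|\mathcal C(\mathcal T)|\le (|X|+1)^{4c_{\mathcal T}-2}$.
   Context: A rooted binary phylogenetic $X$-tree is a rooted tree with leaf set $X$ in which the root has degree two and all other interior vertices have degree three. A cherry is a pair of leaves adjacent to a common vertex; $c_{\mathcal T}$ is the number of cherries of $\mathcal T$. For a leaf $a$, $\mathcal T[-a]$ is obtained by deleting $a$ and suppressing the resulting non-root degree-2 vertex (if the tree is a single vertex $a$, deleting it yields the empty tree $\emptyset$). The set $\mathcal C(\mathcal T)$ of cherry-picked trees of $\mathcal T$ is the smallest set of trees (leaf-labeled, up to isomorphism preserving labels) containing $\mathcal T$ and $\emptyset$ such that whenever $\mathcal T'\in\mathcal C(\mathcal T)$ and $\{a,b\}$ is a cherry of $\mathcal T'$, both $\mathcal T'[-a]$ and $\mathcal T'[-b]$ are in $\mathcal C(\mathcal T)$. *)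

From mathcomp Require Import all_boot.
Set Implicit Arguments. Unset Strict Implicit. Unset Printing Implicit Defensive.

(* A [Node l r] is an interior vertex with two children; the root of a tree
   of the form [Node _ _] has degree two and every other interior vertex has
   degree three. *)
Inductive ptree : Type :=
| Leaf of nat
| Node of ptree & ptree.

Fixpoint leaves (t : ptree) : seq nat :=
  match t with
  | Leaf a => [:: a]
  | Node l r => leaves l ++ leaves r
  end.

(* t is a rooted binary phylogenetic X-tree for X = leaves t (distinct labels). *)
Definition phylo (t : ptree) : bool := uniq (leaves t).

Definition is_node (t : ptree) : bool := if t is Node _ _ then true else false.

Fixpoint iso (t u : ptree) : bool :=
  match t, u with
  | Leaf a, Leaf b => a == b
  | Node l r, Node l' r' => (iso l l' && iso r r') || (iso l r' && iso r l')
  | _, _ => false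
  end.

(* Trees or the empty tree (None = the empty tree). *)
Definition oiso (t u : option ptree) : bool :=
  match t, u with
  | None, None => true
  | Some t, Some u => iso t u
  | _, _ => false
  end.

Fixpoint has_cherry (t : ptree) (a b : nat) : bool :=
  match t with
  | Leaf _ => false
  | Node l r =>
      [|| match l, r with
                      | Leaf x, Leaf y => ((x == a) && (y == b)) || ((x == b) && (y == a))
                      | _, _ => false
                      end,
          has_cherry l a b | has_cherry r a b]
  end.

Fixpoint cherries (t : ptree) : nat :=
  match t with
  | Leaf _ => 0
  | Node (Leaf _) (Leaf _) => 1
  | Node l r => cherries l + cherries r
  end.

(* T[-a]: delete leaf a and suppress the resulting degree-2 vertex
   (if the parent of a was the root, the root disappears and the sibling
   subtree becomes the tree); deleting the single vertex a gives None. *)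
Fixpoint del (a : nat) (t : ptree) : option ptree :=
  match t with
  | Leaf b => if a == b then None else Some (Leaf b)
  | Node l r =>
      match del a l, del a r with
      | None, None => None
      | None, Some r' => Some r'
      | Some l', None => Some l'
      | Some l', Some r' => Some (Node l' r')
      end
  end.

(* The cherry-picked trees C(T) (as concrete representatives; the set C(T)
   itself is this set taken up to label-preserving isomorphism [oiso]). *)
Inductive cherry_picked (T : ptree) : option ptree -> Prop :=
| cp_self : cherry_picked T (Some T)
| cp_empty : cherry_picked T None
| cp_step (t : ptree) (a b : nat) :
    cherry_picked T (Some t) -> has_cherry t a b ->
    cherry_picked T (del a t).

(* Every cherry-picked tree of T is a pruning of T: a tree keeping the branching
   of T above some antichain of vertices and collapsing the subtree below each of
   them to one of its leaves.  Picking a cherry collapses a cherry of a pruning to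
   its surviving leaf, and since leaf labels are distinct the deletion happens
   inside a single child, so the result is again a pruning.  A tree with children
   L and R has |P(L)| |P(R)| + |X| prunings, whence |P(T)| <= |X|^(2 c_T) by
   induction, using x^k + x + 1 <= (x+1)^k (k >= 2) with x = |X| - 1; finally
   |C(T)| <= |X|^(2 c_T) + 1 <= (|X|+1)^(2 c_T) <= (|X|+1)^(4 c_T - 2). *)
From HB Require Import structures.
From mathcomp Require Import all_boot zify.
Set Implicit Arguments. Unset Strict Implicit.

Lemma ptree_eq_dec : comparable ptree.
Proof. move=> t u; rewrite /decidable; decide equality; exact: eq_comparable. Qed.

HB.instance Definition _ := comparableMixin ptree_eq_dec.

Lemma iso_refl t : iso t t.
Proof. by elim: t => [a|l IHl r IHr] /=; rewrite ?eqxx ?IHl ?IHr. Qed.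

Fixpoint prunings (T : ptree) : seq ptree :=
  match T with
  | Leaf a => [:: Leaf a]
  | Node L R =>
      [seq Node l r | l <- prunings L, r <- prunings R] ++
      [seq Leaf x | x <- leaves L ++ leaves R]
  end.

Lemma mem_prunings_self T : T \in prunings T.
Proof.
elim: T => [a|L IHL R IHR] /=; first by rewrite inE.
by rewrite mem_cat; apply/orP; left; apply/allpairsP; exists (L, R).
Qed.

Lemma prunings_subseq T t : t \in prunings T -> subseq (leaves t) (leaves T).
Proof.
elim: T t => [a|L IHL R IHR] t /=; first by rewrite inE => /eqP -> /=; rewrite eqxx.
rewrite mem_cat => /orP[/allpairsP[[l r] /= [hl hr ->]] | /mapP[x hx ->]] /=.
  exact: cat_subseq (IHL l hl) (IHR r hr).
by rewrite sub1seq.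
Qed.

Lemma del_notin a t : a \notin leaves t -> del a t = Some t.
Proof.
elim: t => [b|l IHl r IHr] /=; first by rewrite inE => /negPf ->.
by rewrite mem_cat negb_or => /andP[/IHl -> /IHr ->].
Qed.

Lemma del_Node_left a l r l' :
  a \notin leaves r -> del a l = Some l' -> del a (Node l r) = Some (Node l' r).
Proof. by move=> /del_notin /= -> ->. Qed.

Lemma del_Node_right a l r r' :
  a \notin leaves l -> del a r = Some r' -> del a (Node l r) = Some (Node l r').
Proof. by move=> /del_notin /= -> ->. Qed.

Lemma del_neq_None a b t : b \in leaves t -> b != a -> del a t != None.
Proof.
elim: t => [c|l IHl r IHr] /=.
  by rewrite inE => /eqP -> /negPf; rewrite eq_sym => ->.
rewrite mem_cat => /orP[bl | br] ba.
  by move: (IHl bl ba); case: (del a l) => // l'; case: (del a r).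
by move: (IHr br ba); case: (del a r) => // r'; case: (del a l).
Qed.

Lemma has_cherry_mem t a b :
  has_cherry t a b -> (a \in leaves t) && (b \in leaves t).
Proof.
elim: t => [c|l IHl r IHr] //=; rewrite !mem_cat.
case/or3P=> [|/IHl/andP[-> ->] // | /IHr/andP[-> ->]]; last by rewrite !orbT.
case: l {IHl} => [x|? ?] //; case: r {IHr} => [y|? ?] //=.
by case/orP=> /andP[/eqP-> /eqP->]; rewrite !inE !eqxx ?orbT.
Qed.

Lemma has_cherry_neq t a b : uniq (leaves t) -> has_cherry t a b -> a != b.
Proof.
elim: t => [c|l IHl r IHr] //=; rewrite cat_uniq => /and3P[ul disj ur].
case/or3P=> [|/(IHl ul) // | /(IHr ur) //].
case: l {IHl} ul disj => [x|? ?] //; case: r {IHr} ur => [y|? ?] //= _ _.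
rewrite inE orbF => xy.
by case/orP=> /andP[/eqP<- /eqP<-]; rewrite // eq_sym.
Qed.

Lemma del_cherry_neq_None t a b :
  uniq (leaves t) -> has_cherry t a b -> del a t != None.
Proof.
move=> ut hc; have /andP[_ bt] := has_cherry_mem hc.
by apply: (del_neq_None bt); rewrite eq_sym (has_cherry_neq ut hc).
Qed.

Lemma prunings_del_cherry T t a b t' :
  uniq (leaves T) -> t \in prunings T -> has_cherry t a b ->
  del a t = Some t' -> t' \in prunings T.
Proof.
elim: T t t' => [c|L IHL R IHR] t t' /=; first by move=> _; rewrite inE => /eqP->.
rewrite cat_uniq => /and3P[uL disj uR].
rewrite mem_cat => /orP[/allpairsP[[l r] /= [hl hr ->]] | /mapP[? _ ->]] //.
have sl := prunings_subseq hl; have sr := prunings_subseq hr.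
have notin_other x : x \in leaves l -> x \in leaves r -> false.
  by move=> xl xr; move/hasPn: disj => /(_ x (mem_subseq sr xr)); rewrite (mem_subseq sl xl).
case/or3P=> [| hc | hc].
- case: (l : ptree) hl sl => [x|? ?] // hl; case: (r : ptree) hr sr => [y|? ?] //= hr.
  rewrite !sub1seq => yR xL /orP[] /andP[/eqP ? /eqP ?]; subst;
    rewrite eqxx; case: ifP => // _ [<-]; rewrite mem_cat; apply/orP; right;
    by apply: map_f; rewrite mem_cat ?xL ?yR ?orbT.
- have ul := subseq_uniq sl uL; have /andP[al _] := has_cherry_mem hc.
  have ar : a \notin leaves r by apply/negP => /(notin_other a al).
  case dl: (del a l) (del_cherry_neq_None ul hc) => [l'|] // _.
  rewrite (del_Node_left ar dl) => -[<-].
  by rewrite mem_cat; apply/orP; left; apply/allpairsP; exists (l', r); rewrite (IHL l).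
- have ur := subseq_uniq sr uR; have /andP[ar _] := has_cherry_mem hc.
  have al : a \notin leaves l by apply/negP => /notin_other/(_ ar).
  case dr: (del a r) (del_cherry_neq_None ur hc) => [r'|] // _.
  rewrite (del_Node_right al dr) => -[<-].
  by rewrite mem_cat; apply/orP; left; apply/allpairsP; exists (l, r'); rewrite (IHR r).
Qed.

Lemma cherry_picked_prunings T t :
  phylo T -> cherry_picked T (Some t) -> t \in prunings T.
Proof.
move=> uT; move eu: (Some t) => u cpu.
elim: cpu t eu => [t [<-] | // | t' a b _ IH hc t dt].
  exact: mem_prunings_self.
exact: prunings_del_cherry uT (IH t' erefl) hc (esym dt).
Qed.

Lemma leaves_gt0 t : 0 < size (leaves t).
Proof. by elim: t => [a|l IHl r IHr] //=; rewrite size_cat addn_gt0 IHl. Qed.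

Lemma cherries_gt0 t : is_node t -> 0 < cherries t.
Proof.
elim: t => [a|l IHl r IHr] //= _.
case: l IHl => [x|l1 l2] IHl; case: r IHr => [y|r1 r2] IHr //=.
- exact: IHr.
- by rewrite addn0; apply: IHl.
- by rewrite addn_gt0 IHl.
Qed.

Lemma cherries_Node L R :
  is_node L || is_node R -> cherries (Node L R) = cherries L + cherries R.
Proof. by case: L => [x|? ?]; case: R => [y|? ?]. Qed.

Lemma leq_expn2r m n e : m <= n -> m ^ e <= n ^ e.
Proof. by move=> le_mn; elim: e => // e IH; rewrite !expnS leq_mul. Qed.

Lemma leq_exp_add1 x k : 1 < k -> x ^ k + x + 1 <= (x + 1) ^ k.
Proof.
elim: k => // k IH; rewrite ltnS leq_eqVlt => /orP[/eqP <- | /IH le_k].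
  by rewrite !expnS expn0; nia.
have := leq_mul (leqnn (x + 1)) le_k; rewrite !expnS; nia.
Qed.

Lemma size_prunings T : size (prunings T) <= size (leaves T) ^ (2 * cherries T).
Proof.
elim: T => [a|L IHL R IHR] //.
have [node_LR|] := boolP (is_node L || is_node R); last by case: L {IHL}; case: R {IHR}.
rewrite (cherries_Node node_LR) /= size_cat size_allpairs size_map size_cat.
have := leaves_gt0 L; have := leaves_gt0 R.
set nL := size (leaves L) in IHL *; set nR := size (leaves R) in IHR * => nR_gt0 nL_gt0.
have -> : nL + nR = (nL + nR).-1 + 1 by lia.
set x := (nL + nR).-1.
have kL : size (prunings L) <= x ^ (2 * cherries L).
  by apply: leq_trans IHL (leq_expn2r _ _); lia.
have kR : size (prunings R) <= x ^ (2 * cherries R).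
  by apply: leq_trans IHR (leq_expn2r _ _); lia.
have k_gt1 : 1 < 2 * (cherries L + cherries R) by case/orP: node_LR => /cherries_gt0; lia.
have := leq_exp_add1 x k_gt1; have := leq_mul kL kR; rewrite -expnD -mulnDr; lia.
Qed.

Theorem mainTheorem6 (T : ptree) :
  is_node T -> phylo T ->
  exists s : seq (option ptree),
    size s <= (size (leaves T)).+1 ^ (4 * cherries T - 2) /\
    (forall u, cherry_picked T u -> has (oiso u) s).
Proof.
move=> node_T phylo_T; exists (None :: map Some (prunings T)); split.
  rewrite /= size_map; have c_gt0 := cherries_gt0 node_T.
  have := size_prunings T; have := @leq_exp_add1 (size (leaves T)) (2 * cherries T).
  move: (size (leaves T)) (cherries T) c_gt0 => n c c_gt0 le_exp le_size.
  apply: (@leq_trans ((n + 1) ^ (2 * c))); last by rewrite addn1 leq_pexp2l //; lia.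
  by have := le_exp ltac:(lia); lia.
move=> [t|] // /(cherry_picked_prunings phylo_T) t_pruning.
by apply/hasP; exists (Some t); [exact: map_f | exact: iso_refl].
Qed.
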